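(* For every permutation $w$ of $\{1,\ldots,n\}$, one has $\mathrm{spec}_q\,\mathrm{wt}(w)=q^{\mathrm{inv}(w)}$, where $\mathrm{inv}(w):=|\{(i,j): i<j,\ w_i>w_j\}|$.
   Context: Work in $\mathbb{Q}(x_1,x_2,\ldots)$ with the field endomorphism $F$ given by $F(x_i)=x_{i+1}$. Define $[n]:=x_1+\cdots+x_n$, $[0]!:=1$, $[n]!:=[n]\cdot F([n-1]!)=\prod_{j=0}^{n-1}F^j[n-j]$. For a $k$-element set $S=\{i_1>\cdots>i_k\}$ of positive integers, $\mathrm{wt}(S):=\frac{\prod_{j=1}^k F^{i_j-1}[j]}{[k]!}$ ($\mathrm{wt}(\emptyset)=1$). For a permutation $w=(w_1,\ldots,w_n)$ in one-line notation, $\mathrm{wt}(w)$ is defined recursively: the empty permutation has weight $1$; otherwise let $k:=w_1-1$, $S(w):=\{i:w_i\le k\}$, $a$ the permutation of $\{1,\ldots,k\}$ listing the values $w_i\le k$ in order of increasing $i$, and $\hat b$ the permutation of $\{1,\ldots,n-k-1\}$ listing the values $w_i-k-1$ for $w_i>k+1$ in order of increasing $i$; then $\mathrm{wt}(w):=\mathrm{wt}(S(w))\,\mathrm{wt}(a)\,F^{k+1}(\mathrm{wt}(\hat b))$. The $q$-specialization $\mathrm{spec}_q$ is the substitution $x_i\mapsto q^{i-1}-q^i$ into $\mathbb{Q}(q)$ (it is defined on all the rational functions $\mathrm{wt}(w)$, whose denominators are products of sums $x_a+x_{a+1}+\cdots+x_b$, which specialize to $q^{a-1}-q^b\neq 0$).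 *)

From HB Require Import structures.
From mathcomp Require Import all_boot all_order all_algebra all_fingroup.
From mathcomp Require Import fraction.
Set Implicit Arguments. Unset Strict Implicit. Unset Printing Implicit Defensive.
Import Order.TTheory GRing.Theory Num.Theory.
Local Open Scope ring_scope.

(* A rational function f in x_1, x_2, ... is represented semantically by its
   evaluation at an arbitrary point x : nat -> K of a field K (x i stands for
   x_i, i >= 1; x 0 is unused).  The shift F(x_i) = x_{i+1} then acts by
   (F^m f)(x) = f(fun i => x (i + m)). *)

Section Weights.
Variable K : fieldType.

Definition shiftx (m : nat) (x : nat -> K) : nat -> K := fun i => x (i + m)%N.

Definition brk (n : nat) (x : nat -> K) : K := \sum_(1 <= i < n.+1) x i.

Definition brkfact (n : nat) (x : nat -> K) : K :=
  \prod_(j < n) brk (n - j) (shiftx j x).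

(* wt(S) for S = {i_1 > ... > i_k}, given as the decreasing list [:: i_1; ...; i_k] *)
Definition wtS (S : seq nat) (x : nat -> K) : K :=
  (\prod_(j < size S) brk j.+1 (shiftx (nth 0 S j).-1 x)) / brkfact (size S) x.

(* wt(w) for w in one-line notation (a list of the values w_1, ..., w_n),
   by recursion with fuel. *)
Fixpoint wtf (fuel : nat) (w : seq nat) (x : nat -> K) : K :=
  match fuel with
  | 0 => 1
  | fuel'.+1 =>
    match w with
    | [::] => 1
    | w1 :: _ =>
      let k := w1.-1 in
      (* S(w) = {i : w_i <= k}, positions 1-based, listed decreasingly *)
      let S := rev [seq i.+1 | i <- iota 0 (size w) & (nth 0 w i <= k)%N] in
      let a := [seq v <- w | (v <= k)%N] in
      let bh := [seq (v - k.+1)%N | v <- w & (k.+1 < v)%N] in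
      wtS S x * wtf fuel' a x * wtf fuel' bh (shiftx k.+1 x)
    end
  end.

Definition wt (w : seq nat) (x : nat -> K) : K := wtf (size w) w x.
End Weights.

Definition oneline (n : nat) (s : 'S_n) : seq nat :=
  [seq (s i).+1 | i <- enum 'I_n].

Definition invnum (n : nat) (s : 'S_n) : nat :=
  #|[set p : 'I_n * 'I_n | (p.1 < p.2)%N && (s p.2 < s p.1)%N]|.

Definition Qq := {fraction {poly rat}}.
Definition qvar : Qq := tofrac 'X.
Definition specx : nat -> Qq := fun i => qvar ^+ i.-1 - qvar ^+ i.

From mathcomp Require Import all_boot all_order all_algebra all_fingroup.
From mathcomp Require Import fraction.
From Stdlib Require Import FunctionalExtensionality.
From mathcomp Require Import ring zify.
Set Implicit Arguments. Unset Strict Implicit. Unset Printing Implicit Defensive.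
Import Order.TTheory GRing.Theory Num.Theory.

(* Under x_i |-> q^(i-1) - q^i the shifted bracket F^t [n] becomes q^t (1 - q^n).
   Hence every factor 1 - q^j of wt(S) cancels against one of [k]!, and for
   S = {i_1 > ... > i_k} the weight wt(S) specializes to q^(sum_j (i_j - j)).
   When S is the set of positions of the values <= k = w_1 - 1, this exponent
   counts the pairs i < j with w_i > k >= w_j, i.e. the inversions of w between
   its large and its small values.  The other inversions of w are those of a and
   of \hat b, so induction on w (for all shifts F^m of the point at once) gives
   q^inv(w). *)

Fixpoint inversions (w : seq nat) : nat :=
  if w is x :: t then count (fun y => y < x) t + inversions t else 0.

Fixpoint crossings (Q : pred nat) (w : seq nat) : nat :=
  if w is x :: t then (if Q x then 0 else count Q t) + crossings Q t else 0.

Definition positions (Q : pred nat) (w : seq nat) : seq nat :=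
  rev [seq i.+1 | i <- iota 0 (size w) & Q (nth 0 w i)].

Lemma count_nth_iota (Q : pred nat) w :
  count (fun i => Q (nth 0 w i)) (iota 0 (size w)) = count Q w.
Proof. by rewrite -count_map -/(mkseq _ _) mkseq_nth. Qed.

Lemma size_positions Q w : size (positions Q w) = count Q w.
Proof. by rewrite size_rev size_map size_filter count_nth_iota. Qed.

Lemma sum_positions Q w :
  \sum_(i <- iota 0 (size w) | Q (nth 0 w i)) i = crossings Q w + \sum_(j < count Q w) j.
Proof.
elim: w => [|x t IH]; first by rewrite big_nil big_ord0.
rewrite /= -add1n iotaDl big_cons big_map.
under eq_bigr do rewrite -add1n.
rewrite big_split /= sum1_count count_nth_iota IH.
by case: (Q x); rewrite /= ?add0n ?big_ord_recr /=; set T := \sum_(_ < _) _; lia.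
Qed.

Lemma sum_pred_positions Q w :
  \sum_(j < size (positions Q w)) (nth 0 (positions Q w) j).-1
  = crossings Q w + \sum_(j < count Q w) j.
Proof.
rewrite -(big_mkord xpredT (fun j => (nth 0 _ j).-1)) -(big_nth 0 xpredT predn).
by rewrite big_rev big_map big_filter sum_positions.
Qed.

Lemma count_split_filter (T : Type) (p a : pred T) (s : seq T) :
  count a s = count a [seq x <- s | p x] + count a [seq x <- s | ~~ p x].
Proof. by elim: s => //= x s ->; case: (p x); [exact: addnA | exact: addnCA]. Qed.

Lemma inversions_split k t : k.+1 \notin t ->
  inversions t = inversions [seq v <- t | v <= k]
    + inversions [seq v - k.+1 | v <- t & k.+1 < v] + crossings (fun v => v <= k) t.
Proof.
elim: t => [|y t IH] //=; rewrite in_cons negb_or => /andP[yk kt].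
have t_neq z : z \in t -> z != k.+1 by move=> zt; apply: contraNneq kt => <-.
rewrite (IH kt) (count_split_filter (fun v => v <= k)).
case: (leqP y k) => [le_yk | lt_ky] /=.
- have large_ge_y : count (fun z => z < y) [seq v <- t | ~~ (v <= k)] = 0.
    rewrite (@eq_in_count _ _ pred0) ?count_pred0 // => z.
    by rewrite mem_filter -ltnNge => /andP[lt_kz _] /=; lia.
  by rewrite ltnNge (leqW le_yk) /= large_ge_y; lia.
- have lt_k1y : k.+1 < y by rewrite ltn_neqAle yk.
  have small_lt_y : count (fun z => z < y) [seq v <- t | v <= k] = count (fun v => v <= k) t.
    rewrite -[RHS]size_filter -count_predT; apply: eq_in_count => z.
    by rewrite mem_filter => /andP[le_zk _] /=; lia.
  have large_lt_y : count (fun z => z < y) [seq v <- t | ~~ (v <= k)]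
                  = count (fun z => z < y - k.+1) [seq v - k.+1 | v <- t & k.+1 < v].
    rewrite count_map !count_filter; apply: eq_in_count => z zt /=.
    by have := t_neq z zt; case: (ltnP k z) => /= [lt_kz /eqP ne_zk | //]; lia.
  by rewrite lt_k1y /= small_lt_y large_lt_y; lia.
Qed.

Lemma inversions_cons_split k t : k.+1 \notin t ->
  inversions (k.+1 :: t) = crossings (fun v => v <= k) (k.+1 :: t)
    + inversions [seq v <- t | v <= k] + inversions [seq v - k.+1 | v <- t & k.+1 < v].
Proof.
move=> kt; rewrite /= ltnn (inversions_split kt).
change (count _ t) with (count (fun v => v <= k) t); lia.
Qed.

Lemma inversions_nth w :
  inversions w = \sum_(i < size w) \sum_(j < size w) ((i < j) && (nth 0 w j < nth 0 w i)).
Proof.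
elim: w => [|x t IH]; first by rewrite big_ord0.
rewrite /= !big_ord_recl /= add0n IH; congr (_ + _).
- rewrite -sum1_count (big_nth 0) big_mkord big_mkcond /=.
  by apply: eq_bigr => j _; case: (_ < x).
- apply: eq_bigr => i _; rewrite big_ord_recl /= add0n.
  by apply: eq_bigr => j _; rewrite /bump /= !add1n ltnS.
Qed.

Lemma invnum_oneline n (s : 'S_n) : invnum s = inversions (oneline s).
Proof.
rewrite inversions_nth /invnum /oneline size_map size_enum_ord.
have nth_oneline (i : 'I_n) : nth 0 [seq (s i).+1 | i <- enum 'I_n] i = (s i).+1.
  by rewrite (nth_map i) ?size_enum_ord // nth_ord_enum.
under [RHS]eq_bigr do under eq_bigr do rewrite !nth_oneline ltnS.
rewrite pair_bigA /= -sum1_card big_mkcond /=.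
by apply: eq_bigr => p _; rewrite inE; case: (_ && _).
Qed.

Local Open Scope ring_scope.

Lemma shiftxD (K : fieldType) a b (x : nat -> K) : shiftx a (shiftx b x) = shiftx (a + b) x.
Proof. by apply: functional_extensionality => i; rewrite /shiftx addnA. Qed.

Lemma shiftx0 (K : fieldType) (x : nat -> K) : shiftx 0 x = x.
Proof. by apply: functional_extensionality => i; rewrite /shiftx addn0. Qed.

Lemma qvar_neq0 : qvar != 0.
Proof. by rewrite tofrac_eq0 polyX_eq0. Qed.

Lemma one_sub_qvarX_neq0 n : (0 < n)%N -> 1 - qvar ^+ n != 0.
Proof.
move=> n_gt0; rewrite /qvar -tofracXn -tofrac1 -tofracB tofrac_eq0.
apply/eqP => /(congr1 (fun p : {poly rat} => p`_n)).
by rewrite coefB coef1 coefXn eqxx coef0 (gtn_eqF n_gt0) sub0r => /eqP; rewrite oppr_eq0 oner_eq0.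
Qed.

Lemma brk_shiftx_specx n t : brk n (shiftx t specx) = qvar ^+ t * (1 - qvar ^+ n).
Proof.
elim: n => [|n IH]; first by rewrite /brk big_geq // subrr mulr0.
rewrite /brk big_nat_recr //= -/(brk n _) IH /shiftx /specx addSn /=.
by rewrite !exprS !exprD; ring.
Qed.

Lemma prod_brk_shiftx_specx k (f g : nat -> nat) :
  \prod_(j < k) brk (f j) (shiftx (g j) specx)
  = qvar ^+ (\sum_(j < k) g j) * \prod_(j < k) (1 - qvar ^+ f j).
Proof. by under eq_bigr do rewrite brk_shiftx_specx; rewrite big_split prodrXr. Qed.

Lemma brkfact_shiftx_specx k m :
  brkfact k (shiftx m specx)
  = qvar ^+ (\sum_(j < k) j + k * m) * \prod_(j < k) (1 - qvar ^+ j.+1).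
Proof.
rewrite /brkfact; under eq_bigr do rewrite shiftxD.
rewrite (prod_brk_shiftx_specx _ (fun j => k - j)%N (fun j => j + m)%N).
rewrite big_split sum_nat_const card_ord [X in _ * X](reindex_inj rev_ord_inj) /=.
by congr (_ * _); apply: eq_bigr => j _; rewrite subKn.
Qed.

Lemma wtS_shiftx_specx S m :
  wtS S (shiftx m specx)
  = qvar ^+ (\sum_(j < size S) (nth 0 S j).-1) / qvar ^+ (\sum_(j < size S) j).
Proof.
rewrite /wtS brkfact_shiftx_specx; under eq_bigr do rewrite shiftxD.
rewrite (prod_brk_shiftx_specx _ succn (fun j => (nth 0 S j).-1 + m)%N).
rewrite big_split sum_nat_const card_ord !exprD -2!(mulrA _ (qvar ^+ (size S * m))).
rewrite -mulf_div divff ?mulr1 //.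
apply: mulf_neq0; first exact: expf_neq0 qvar_neq0.
by rewrite prodf_seq_neq0; apply/allP => j _; apply: one_sub_qvarX_neq0.
Qed.

Lemma wtS_positions_shiftx_specx Q w m :
  wtS (positions Q w) (shiftx m specx) = qvar ^+ crossings Q w.
Proof.
by rewrite wtS_shiftx_specx sum_pred_positions size_positions exprD mulfK ?expf_neq0 ?qvar_neq0.
Qed.

Lemma wtf_cons fuel k t (x : nat -> Qq) :
  wtf fuel.+1 (k.+1 :: t) x
  = wtS (positions (fun v => v <= k)%N (k.+1 :: t)) x
    * wtf fuel [seq v <- t | (v <= k)%N] x
    * wtf fuel [seq (v - k.+1)%N | v <- t & (k.+1 < v)%N] (shiftx k.+1 x).
Proof.
have drop_head (p : pred nat) : ~~ p k.+1 -> [seq v <- k.+1 :: t | p v] = [seq v <- t | p v].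
  by move=> /negbTE /= ->.
have -> : wtf fuel.+1 (k.+1 :: t) x
  = wtS (positions (fun v => v <= k)%N (k.+1 :: t)) x
    * wtf fuel [seq v <- k.+1 :: t | (v <= k)%N] x
    * wtf fuel [seq (v - k.+1)%N | v <- k.+1 :: t & (k.+1 < v)%N] (shiftx k.+1 x) by [].
by rewrite !drop_head ?ltnn.
Qed.

Lemma wtf_shiftx_specx fuel w m :
  (size w <= fuel)%N -> uniq w -> all (leq 1) w ->
  wtf fuel w (shiftx m specx) = qvar ^+ inversions w.
Proof.
elim: fuel w m => [|fuel IH] [|[|k] t] m // size_t /andP[kt uniq_t] /andP[_ pos_t].
rewrite wtf_cons wtS_positions_shiftx_specx shiftxD !IH.
- (* Compare exponents first: deciding [qvar ^+ a = qvar ^+ b] by conversion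
     would compute in the fraction field. *)
  by rewrite -!exprD; congr (_ ^+ _); rewrite (inversions_cons_split kt).
- by rewrite size_map size_filter (leq_trans (count_size _ _)).
- rewrite map_inj_in_uniq; first exact: filter_uniq.
  by move=> u v; rewrite !mem_filter => /andP[lt_ku _] /andP[lt_kv _]; lia.
- by apply/allP => v /mapP[u]; rewrite mem_filter => /andP[lt_ku _] ->; rewrite subn_gt0.
- by rewrite size_filter (leq_trans (count_size _ _)).
- exact: filter_uniq.
- by apply/allP => v; rewrite mem_filter => /andP[_ vt]; apply: (allP pos_t).
Qed.

Theorem corollary5p4 (n : nat) (s : 'S_n) :
  wt (oneline s) specx = qvar ^+ invnum s.
Proof.
rewrite /wt -(shiftx0 specx) wtf_shiftx_specx // ?invnum_oneline //.
- by rewrite map_inj_uniq ?enum_uniq // => i j /succn_inj /val_inj /perm_inj.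
- by apply/allP => v /mapP[i _ ->].
Qed.
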